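(* Let $\omega\in(0,1]$, $a\in(0,1]$, $\hat R_*>0$, and fix $j\in\mathbb{N}$, $\varepsilon_j>0$, $d_j\in(0,1/4]$, $R_j\in(\hat R_*,1]$. Suppose that the stage-$j$ Hamiltonian $H^{(j)}=\omega pq+\eta+F^{(j)}(p,q,t)$ satisfies $\|F^{(j)}(p,q,t)\|_{R_j;\mathbb{R}^+}\le\varepsilon_je^{-at}$ for all $t\in\mathbb{R}^+$, and that $$\frac{4e^2\varepsilon_j}{\omega a\hat R_*^2d_j^6}\le\frac12.$$ Set $R_{j+1}:=(1-2d_j)R_j$ and $\varepsilon_{j+1}:=\dfrac{8e^2\varepsilon_j^2}{\omega a\hat R_*^2d_j^6}$. Then the stage-$(j+1)$ perturbation satisfies $\|F^{(j+1)}(p,q,t)\|_{R_{j+1};\mathbb{R}^+}\le\varepsilon_{j+1}e^{-at}$ for all $t\in\mathbb{R}^+$.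
   Context: $\mathbb{R}^+:=[0,\infty)$; multi-indices $\underline\alpha=(\alpha_1,\alpha_2)\in\mathbb{N}^2$, $|\underline\alpha|=\alpha_1+\alpha_2$. Time-dependent Taylor norm: $\|G\|_{\rho;\mathbb{R}^+}:=\sum_{\underline\alpha}|g_{\underline\alpha}(t)|\rho^{|\underline\alpha|}$ for $G=\sum g_{\underline\alpha}(t)p^{\alpha_1}q^{\alpha_2}$. $F^{(j)}=\sum_{\underline\alpha}f^{(j)}_{\underline\alpha}(t)p^{\alpha_1}q^{\alpha_2}$ is holomorphic in $(p,q)$ for $|p|,|q|<R_j$ with continuous coefficients. The generating function $\chi^{(j)}=\sum_{\underline\alpha}c_{\underline\alpha}(t)p^{\alpha_1}q^{\alpha_2}$ is defined by: for $\hat\lambda:=\omega(\alpha_1-\alpha_2)$, $c_{\underline\alpha}$ solves $\dot c_{\underline\alpha}+\hat\lambda c_{\underline\alpha}=f^{(j)}_{\underline\alpha}$ with $c_{\underline\alpha}(0)=0$ if $\hat\lambda>0$ and $c_{\underline\alpha}(0)=-\int_0^\infty e^{\hat\lambda s}f^{(j)}_{\underline\alpha}(s)ds$ if $\hat\lambda\le0$ (so that $\{\omega pq+\eta,\chi^{(j)}\}+F^{(j)}=0$). For functions independent of $\eta$, $\mathcal{L}_\chi G:=\{G,\chi\}=\partial_qG\,\partial_p\chi-\partial_pG\,\partial_q\chi$. The next stage is $H^{(j+1)}:=\exp(\mathcal{L}_{\chi^{(j)}})H^{(j)}=\omega pq+\eta+F^{(j+1)}$ with $F^{(j+1)}:=\sum_{s\ge1}\frac{s}{(s+1)!}\mathcal{L}^s_{\chi^{(j)}}F^{(j)}$.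 *)

From Stdlib Require Export Reals Factorial.
Open Scope R_scope.

(* A function G(p,q,t) = sum_{a,b} g_{a,b}(t) p^a q^b is represented by its
   coefficient family  g : nat -> nat -> R -> R,  g a b t = g_{(a,b)}(t). *)
Definition series := nat -> nat -> R -> R.

(* ||G||_{rho;R+} <= B at time t: the nonnegative double series
   sum_{a,b} |g_{a,b}(t)| rho^{a+b} converges with sum <= B, i.e. all its
   partial sums (grouped by total degree n = a+b) are <= B. *)
Definition normle (G : series) (rho B t : R) : Prop :=
  forall N : nat,
    sum_f_R0 (fun n => sum_f_R0 (fun k => Rabs (G k (n - k)%nat t) * rho ^ n) n) N
    <= B.

Definition cont_on_Rplus (f : R -> R) : Prop :=
  forall t, 0 <= t -> forall eps, 0 < eps -> exists del, 0 < del /\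
    forall s, 0 <= s -> Rabs (s - t) < del -> Rabs (f s - f t) < eps.

Definition coeffs_continuous (F : series) : Prop :=
  forall a b, cont_on_Rplus (F a b).

Definition improper_int0 (g : R -> R) (L : R) : Prop :=
  (forall T, 0 <= T -> exists pr : Riemann_integrable g 0 T, True) /\
  forall eps, 0 < eps -> exists T0, forall T, T0 <= T -> 0 <= T ->
    forall pr : Riemann_integrable g 0 T, Rabs (RiemannInt pr - L) < eps.

(* chi = sum c_{a,b}(t) p^a q^b is the generating function of F:
   with lam = omega (a - b), c solves  c' + lam c = f  on R+, with
   c(0) = 0 if lam > 0 and c(0) = - int_0^oo e^{lam s} f(s) ds if lam <= 0. *)
Definition is_gen_fun (omega : R) (F X : series) : Prop :=
  forall a b,
    let lam := omega * (INR a - INR b) in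
    (forall t, 0 < t -> derivable_pt_lim (X a b) t (F a b t - lam * X a b t)) /\
    cont_on_Rplus (X a b) /\
    (0 < lam -> X a b 0 = 0) /\
    (lam <= 0 -> improper_int0 (fun s => exp (lam * s) * F a b s) (- X a b 0)).

Definition dP (G : series) : series := fun a b t => INR (S a) * G (S a) b t.
Definition dQ (G : series) : series := fun a b t => INR (S b) * G a (S b) t.
Definition smul (P Q : series) : series := fun a b t =>
  sum_f_R0 (fun i => sum_f_R0 (fun k => P i k t * Q (a - i)%nat (b - k)%nat t) b) a.

Definition Lchi (X G : series) : series := fun a b t =>
  smul (dQ G) (dP X) a b t - smul (dP G) (dQ X) a b t.

Definition Lchi_pow (X : series) (s : nat) (G : series) : series :=
  Nat.iter s (Lchi X) G.

(* The generating function [chi] is controlled coefficientwise, uniformly in time: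
   with the integrating factor [exp (lam t)], each coefficient solving
   [c' + lam c = f] with [|f(t)| <= M exp (- a t)] stays below [M / (omega a)],
   since a positive rate [lam = omega (alpha1 - alpha2)] is at least [omega].
   The Poisson bracket with [chi] loses radius: on discs of radii [rho < rho'] a
   derivative costs a factor [1 / (rho' - rho)] (Cauchy estimate).  Splitting the
   loss [d R] into [s + 1] equal steps bounds [L_chi^(s+1) F] by
   [K ((s + 1) theta0)^(s + 1)], and the weight [(s + 1) / (s + 2)!] turns this
   into [K (e theta0)^(s + 1)] because [n^n <= n! e^n].  The smallness hypothesis
   makes [e theta0 <= 1/2], so the Lie series is dominated by a geometric series. *)

From Stdlib Require Import Reals Factorial Lra Lia.
From Coquelicot Require Import Coquelicot.
Open Scope R_scope.

(** * Finite double sums *)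

Lemma sum_f_R0_term_le (f : nat -> R) N i :
  (forall j, 0 <= f j) -> (i <= N)%nat -> f i <= sum_f_R0 f N.
Proof.
  intros Hf Hi; induction N; simpl.
  - replace i with 0%nat by lia; lra.
  - destruct (Nat.eq_dec i (S N)) as [->|Hne].
    + assert (0 <= sum_f_R0 f N) by (apply cond_pos_sum; auto). lra.
    + assert (f i <= sum_f_R0 f N) by (apply IHN; lia). specialize (Hf (S N)). lra.
Qed.

Lemma sum_f_R0_le_upper (f : nat -> R) N M :
  (forall j, 0 <= f j) -> (N <= M)%nat -> sum_f_R0 f N <= sum_f_R0 f M.
Proof. intros Hf HNM; induction HNM; simpl; [lra|]. specialize (Hf (S m)); lra. Qed.

Lemma sum_f_R0_shift_le (f : nat -> R) N :
  (forall j, 0 <= f j) -> sum_f_R0 (fun a => f (S a)) N <= sum_f_R0 f (S N).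
Proof.
  intros Hf. rewrite (decomp_sum f (S N)) by lia. simpl pred. specialize (Hf 0%nat). lra.
Qed.

Lemma sum_f_R0_swap (h : nat -> nat -> R) N M :
  sum_f_R0 (fun i => sum_f_R0 (fun j => h i j) M) N =
  sum_f_R0 (fun j => sum_f_R0 (fun i => h i j) N) M.
Proof. induction N; simpl; [reflexivity|]. rewrite IHN, <- plus_sum. reflexivity. Qed.

Lemma sum_f_R0_mult (f g : nat -> R) N M :
  sum_f_R0 f N * sum_f_R0 g M = sum_f_R0 (fun i => sum_f_R0 (fun j => f i * g j) M) N.
Proof.
  induction N; simpl.
  - rewrite scal_sum. apply sum_eq; intros; ring.
  - rewrite Rmult_plus_distr_r, IHN, scal_sum. f_equal. apply sum_eq; intros; ring.
Qed.

Lemma sum_f_R0_antidiagonal (h : nat -> nat -> R) N :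
  sum_f_R0 (fun n => sum_f_R0 (fun k => h k (n - k)%nat) n) N =
  sum_f_R0 (fun i => sum_f_R0 (fun j => h i j) (N - i)) N.
Proof.
  induction N; [reflexivity|].
  rewrite !tech5, IHN, Nat.sub_diag. simpl (sum_f_R0 _ 0).
  replace (S N - S N)%nat with 0%nat by lia.
  assert (E : sum_f_R0 (fun i => sum_f_R0 (fun j => h i j) (S N - i)) N =
    sum_f_R0 (fun i => sum_f_R0 (fun j => h i j) (N - i)) N +
    sum_f_R0 (fun k => h k (S N - k)%nat) N).
  { rewrite <- plus_sum. apply sum_eq; intros i Hi.
    replace (S N - i)%nat with (S (N - i)) by lia. reflexivity. }
  rewrite E. ring.
Qed.

Lemma sum_f_R0_antidiagonal_le (h : nat -> nat -> R) N :
  (forall i j, 0 <= h i j) ->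
  sum_f_R0 (fun n => sum_f_R0 (fun k => h k (n - k)%nat) n) N <=
  sum_f_R0 (fun i => sum_f_R0 (fun j => h i j) N) N.
Proof.
  intros Hh. rewrite sum_f_R0_antidiagonal. apply sum_Rle; intros i Hi.
  apply sum_f_R0_le_upper; auto; lia.
Qed.

Lemma sum_f_R0_cauchy_product_le (p q : nat -> nat -> R) N :
  (forall i k, 0 <= p i k) -> (forall j l, 0 <= q j l) ->
  sum_f_R0 (fun a => sum_f_R0 (fun b =>
    sum_f_R0 (fun i => sum_f_R0 (fun k => p i k * q (a - i)%nat (b - k)%nat) b) a) N) N <=
  sum_f_R0 (fun i => sum_f_R0 (fun k => p i k) N) N *
  sum_f_R0 (fun j => sum_f_R0 (fun l => q j l) N) N.
Proof.
  intros Hp Hq.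
  set (conv := fun i j => sum_f_R0 (fun b => sum_f_R0 (fun k => p i k * q j (b - k)%nat) b) N).
  assert (Hconv : forall i j, 0 <= conv i j).
  { intros; apply cond_pos_sum; intros; apply cond_pos_sum; intros; apply Rmult_le_pos; auto. }
  rewrite (sum_eq _ (fun a => sum_f_R0 (fun i => conv i (a - i)%nat) a))
    by (intros; apply sum_f_R0_swap).
  eapply Rle_trans; [apply (sum_f_R0_antidiagonal_le conv N Hconv)|].
  apply Rle_trans with (sum_f_R0 (fun i => sum_f_R0 (fun j =>
     sum_f_R0 (fun k => sum_f_R0 (fun l => p i k * q j l) N) N) N) N).
  { apply sum_Rle; intros i _; apply sum_Rle; intros j _.
    apply (sum_f_R0_antidiagonal_le (fun k l => p i k * q j l)).
    intros; apply Rmult_le_pos; auto. }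
  right. rewrite sum_f_R0_mult. apply sum_eq; intros i _. apply sum_eq; intros j _.
  now rewrite sum_f_R0_mult.
Qed.

Lemma sum_geom_le y N : 0 <= y < 1 -> sum_f_R0 (fun i => y ^ i) N <= / (1 - y).
Proof.
  intros Hy. rewrite tech3 by lra.
  assert (0 <= y ^ S N) by (apply pow_le; lra).
  unfold Rdiv. rewrite <- (Rmult_1_l (/ (1 - y))) at 2.
  apply Rmult_le_compat_r; [apply Rlt_le, Rinv_0_lt_compat|]; lra.
Qed.

Lemma sum_geom_deriv_le y N : 0 <= y < 1 ->
  sum_f_R0 (fun a => INR (S a) * y ^ a) N <= / (1 - y) * / (1 - y).
Proof.
  intros Hy.
  rewrite (sum_eq _ (fun n => sum_f_R0 (fun k => (fun i j => y ^ i * y ^ j) k (n - k)%nat) n)).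
  - eapply Rle_trans.
    { apply (sum_f_R0_antidiagonal_le (fun i j => y ^ i * y ^ j)).
      intros; apply Rmult_le_pos; apply pow_le; lra. }
    rewrite <- sum_f_R0_mult.
    apply Rmult_le_compat; try apply cond_pos_sum; intros; try apply pow_le; try lra;
      apply sum_geom_le; lra.
  - intros n _. rewrite Rmult_comm, <- sum_cte.
    apply sum_eq; intros k Hk. rewrite <- pow_add. f_equal; lia.
Qed.

(** * Square partial sums and Cauchy estimates *)

(* [normle] groups the terms by total degree; square partial sums suit products
   and derivatives better and dominate the grouped ones. *)
Definition square_psum (G : series) (rho t : R) (N : nat) : R :=
  sum_f_R0 (fun a => sum_f_R0 (fun b => Rabs (G a b t) * rho ^ a * rho ^ b) N) N.

Definition square_normle (G : series) (rho B t : R) : Prop :=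
  forall N, square_psum G rho t N <= B.

Definition coef_normle (G : series) (rho C t : R) : Prop :=
  forall a b, Rabs (G a b t) * rho ^ a * rho ^ b <= C.

Lemma weighted_coef_nonneg (G : series) rho t a b :
  0 <= rho -> 0 <= Rabs (G a b t) * rho ^ a * rho ^ b.
Proof.
  intros. repeat apply Rmult_le_pos; try apply pow_le; auto; apply Rabs_pos.
Qed.

Lemma coef_normle_nonneg (G : series) rho C t : 0 <= rho -> coef_normle G rho C t -> 0 <= C.
Proof.
  intros Hr HG. eapply Rle_trans; [|apply (HG 0%nat 0%nat)]. now apply weighted_coef_nonneg.
Qed.

Lemma square_normle_weaken (G : series) rho B B' t :
  B <= B' -> square_normle G rho B t -> square_normle G rho B' t.
Proof. intros HB HG N. specialize (HG N). lra. Qed.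

Lemma coef_normle_of_square_normle (G : series) rho B t :
  0 <= rho -> square_normle G rho B t -> coef_normle G rho B t.
Proof.
  intros Hr HG a b. eapply Rle_trans; [|apply (HG (max a b))]. unfold square_psum.
  eapply Rle_trans; [|apply (sum_f_R0_term_le _ _ a)].
  - apply (sum_f_R0_term_le (fun b => Rabs (G a b t) * rho ^ a * rho ^ b)); [|lia].
    intros; now apply weighted_coef_nonneg.
  - intros; apply cond_pos_sum; intros; now apply weighted_coef_nonneg.
  - lia.
Qed.

Lemma normle_of_square_normle (G : series) rho B t :
  0 <= rho -> square_normle G rho B t -> normle G rho B t.
Proof.
  intros Hr HG N. eapply Rle_trans; [|apply (HG N)]. unfold square_psum.
  rewrite (sum_eq _ (fun n => sum_f_R0
    (fun k => (fun i j => Rabs (G i j t) * rho ^ i * rho ^ j) k (n - k)%nat) n)).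
  - apply (sum_f_R0_antidiagonal_le (fun i j => Rabs (G i j t) * rho ^ i * rho ^ j)).
    intros; now apply weighted_coef_nonneg.
  - intros n _. apply sum_eq; intros k Hk.
    replace (rho ^ n) with (rho ^ k * rho ^ (n - k)) by (rewrite <- pow_add; f_equal; lia).
    ring.
Qed.

Lemma coef_normle_of_normle (G : series) rho B t :
  0 <= rho -> normle G rho B t -> coef_normle G rho B t.
Proof.
  intros Hr HG a b. eapply Rle_trans; [|apply (HG (a + b)%nat)].
  assert (Hnn : forall n k, 0 <= Rabs (G k (n - k)%nat t) * rho ^ n).
  { intros; apply Rmult_le_pos; [apply Rabs_pos|apply pow_le; auto]. }
  eapply Rle_trans; [|apply (sum_f_R0_term_le _ _ (a + b)%nat)];
    [| intros; apply cond_pos_sum; auto | lia].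
  eapply Rle_trans; [|apply (sum_f_R0_term_le _ _ a)]; auto; [|lia].
  simpl. replace (a + b - a)%nat with b by lia. rewrite pow_add, Rmult_assoc. apply Rle_refl.
Qed.

Definition transpose (G : series) : series := fun a b t => G b a t.

Lemma square_normle_transpose (G : series) rho B t :
  square_normle G rho B t -> square_normle (transpose G) rho B t.
Proof.
  intros HG N. unfold square_psum, transpose. rewrite sum_f_R0_swap.
  eapply Rle_trans; [|apply (HG N)]. right.
  apply sum_eq; intros; apply sum_eq; intros; ring.
Qed.

Lemma square_normle_of_coef (G : series) R y C t :
  0 < R -> 0 <= y < 1 ->
  coef_normle G R C t ->
  square_normle G (y * R) (C * (/ (1 - y) * / (1 - y))) t.
Proof.
  intros HR Hy HG N. unfold square_psum.
  assert (HC : 0 <= C) by (apply (coef_normle_nonneg G R C t); auto; lra).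
  apply Rle_trans with
    (sum_f_R0 (fun a => sum_f_R0 (fun b => C * (y ^ a * y ^ b)) N) N).
  - apply sum_Rle; intros a _; apply sum_Rle; intros b _.
    rewrite !Rpow_mult_distr.
    replace (Rabs (G a b t) * (y ^ a * R ^ a) * (y ^ b * R ^ b)) with
      ((Rabs (G a b t) * R ^ a * R ^ b) * (y ^ a * y ^ b)) by ring.
    apply Rmult_le_compat_r; [apply Rmult_le_pos; apply pow_le; lra|apply HG].
  - replace (sum_f_R0 (fun a => sum_f_R0 (fun b => C * (y ^ a * y ^ b)) N) N) with
      (C * (sum_f_R0 (fun i => y ^ i) N * sum_f_R0 (fun i => y ^ i) N)).
    2: { rewrite sum_f_R0_mult, scal_sum. apply sum_eq; intros.
         rewrite Rmult_comm, scal_sum. apply sum_eq; intros; ring. }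
    apply Rmult_le_compat_l; auto.
    apply Rmult_le_compat; try apply cond_pos_sum; intros; try apply pow_le; try lra;
      apply sum_geom_le; lra.
Qed.

Lemma pow_succ_sub_ge r r' n : 0 <= r <= r' ->
  INR (S n) * r ^ n * (r' - r) <= r' ^ S n - r ^ S n.
Proof.
  intros Hr. induction n; [simpl; lra|].
  assert (r ^ S n <= r' ^ S n) by (apply pow_incr; lra).
  assert (0 <= r ^ S n) by (apply pow_le; lra).
  assert (r * (INR (S n) * r ^ n * (r' - r)) <= r * (r' ^ S n - r ^ S n))
    by (apply Rmult_le_compat_l; lra).
  assert ((r' - r) * r ^ S n <= (r' - r) * r' ^ S n) by (apply Rmult_le_compat_l; lra).
  rewrite S_INR. simpl in *. nra.
Qed.

Lemma INR_S_pow_le r r' n : 0 <= r < r' ->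
  INR (S n) * r ^ n <= r' ^ S n / (r' - r).
Proof.
  intros Hr. assert (H := pow_succ_sub_ge r r' n ltac:(lra)).
  assert (0 <= r ^ S n) by (apply pow_le; lra).
  apply Rmult_le_reg_r with (r' - r); [lra|].
  replace (r' ^ S n / (r' - r) * (r' - r)) with (r' ^ S n) by (field; lra). lra.
Qed.

Lemma square_normle_dP (G : series) rho rho' B t : 0 <= rho < rho' ->
  square_normle G rho' B t -> square_normle (dP G) rho (B / (rho' - rho)) t.
Proof.
  intros Hr HG N.
  set (row := fun a => sum_f_R0 (fun b => Rabs (G a b t) * rho' ^ a * rho' ^ b) (S N)).
  assert (Hrow : forall a, 0 <= row a).
  { intros; apply cond_pos_sum; intros; apply weighted_coef_nonneg; lra. }
  apply Rle_trans with (sum_f_R0 (fun a => row (S a) / (rho' - rho)) N).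
  - apply sum_Rle; intros a _. unfold row, Rdiv. rewrite (Rmult_comm (sum_f_R0 _ _)), scal_sum.
    eapply Rle_trans; [|apply sum_f_R0_le_upper with (N := N); [|lia]].
    + apply sum_Rle; intros b _. unfold dP.
      rewrite Rabs_mult, (Rabs_right (INR _)) by (apply Rle_ge, pos_INR).
      assert (Hc := INR_S_pow_le rho rho' a Hr).
      assert (rho ^ b <= rho' ^ b) by (apply pow_incr; lra).
      assert (0 <= rho ^ b) by (apply pow_le; lra).
      assert (0 <= Rabs (G (S a) b t)) by apply Rabs_pos.
      assert (0 <= INR (S a) * rho ^ a) by (apply Rmult_le_pos; [apply pos_INR|apply pow_le; lra]).
      unfold Rdiv in Hc.
      replace (INR (S a) * Rabs (G (S a) b t) * rho ^ a * rho ^ b) with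
        (Rabs (G (S a) b t) * (INR (S a) * rho ^ a) * rho ^ b) by ring.
      replace (Rabs (G (S a) b t) * rho' ^ S a * rho' ^ b * / (rho' - rho)) with
        (Rabs (G (S a) b t) * (rho' ^ S a * / (rho' - rho)) * rho' ^ b) by ring.
      apply Rmult_le_compat; nra.
    + intros; apply Rmult_le_pos; [apply weighted_coef_nonneg; lra|].
      apply Rlt_le, Rinv_0_lt_compat; lra.
  - unfold Rdiv. rewrite <- (Rmult_comm (/ (rho' - rho))), <- scal_sum.
    apply Rmult_le_compat_l; [apply Rlt_le, Rinv_0_lt_compat; lra|].
    eapply Rle_trans; [apply (sum_f_R0_shift_le row N Hrow)|]. apply (HG (S N)).
Qed.

Lemma square_normle_dQ (G : series) rho rho' B t : 0 <= rho < rho' ->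
  square_normle G rho' B t -> square_normle (dQ G) rho (B / (rho' - rho)) t.
Proof.
  intros Hr HG. apply (square_normle_transpose (dP (transpose G))).
  now apply square_normle_dP, square_normle_transpose.
Qed.

Lemma square_normle_smul (P Q : series) rho A B t : 0 <= rho ->
  square_normle P rho A t -> square_normle Q rho B t ->
  square_normle (smul P Q) rho (A * B) t.
Proof.
  intros Hr HP HQ N.
  set (p := fun i k => Rabs (P i k t) * rho ^ i * rho ^ k).
  set (q := fun i k => Rabs (Q i k t) * rho ^ i * rho ^ k).
  assert (Hp : forall i k, 0 <= p i k) by (intros; apply weighted_coef_nonneg; auto).
  assert (Hq : forall i k, 0 <= q i k) by (intros; apply weighted_coef_nonneg; auto).
  assert (Hcoef : forall a b, Rabs (smul P Q a b t) * rho ^ a * rho ^ b <=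
     sum_f_R0 (fun i => sum_f_R0 (fun k => p i k * q (a - i)%nat (b - k)%nat) b) a).
  { intros a b. unfold smul. rewrite Rmult_assoc.
    eapply Rle_trans.
    { apply Rmult_le_compat_r; [apply Rmult_le_pos; apply pow_le; auto|].
      eapply Rle_trans; [apply sum_f_R0_triangle|].
      apply sum_Rle; intros i _. apply sum_f_R0_triangle. }
    rewrite Rmult_comm, scal_sum. right. apply sum_eq; intros i Hi.
    rewrite Rmult_comm, scal_sum. apply sum_eq; intros k Hk.
    unfold p, q. rewrite Rabs_mult.
    replace (rho ^ a) with (rho ^ i * rho ^ (a - i)) by (rewrite <- pow_add; f_equal; lia).
    replace (rho ^ b) with (rho ^ k * rho ^ (b - k)) by (rewrite <- pow_add; f_equal; lia).
    ring. }
  eapply Rle_trans; [apply sum_Rle; intros a _; apply sum_Rle; intros b _; apply Hcoef|].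
  eapply Rle_trans; [apply sum_f_R0_cauchy_product_le; auto|].
  apply Rmult_le_compat; try apply HP; try apply HQ;
    apply cond_pos_sum; intros; apply cond_pos_sum; auto.
Qed.

Lemma square_normle_Lchi (X G : series) rho A1 D1 A2 D2 t : 0 <= rho ->
  square_normle (dQ G) rho A1 t -> square_normle (dP X) rho D1 t ->
  square_normle (dP G) rho A2 t -> square_normle (dQ X) rho D2 t ->
  square_normle (Lchi X G) rho (A1 * D1 + A2 * D2) t.
Proof.
  intros Hr H1 H2 H3 H4 N.
  assert (S1 := square_normle_smul _ _ _ _ _ _ Hr H1 H2 N).
  assert (S2 := square_normle_smul _ _ _ _ _ _ Hr H3 H4 N).
  unfold square_psum in *.
  eapply Rle_trans; [|apply Rplus_le_compat; [apply S1|apply S2]].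
  rewrite <- plus_sum. apply sum_Rle; intros a _.
  rewrite <- plus_sum. apply sum_Rle; intros b _.
  unfold Lchi. rewrite !Rmult_assoc, <- Rmult_plus_distr_r.
  apply Rmult_le_compat_r; [apply Rmult_le_pos; apply pow_le; auto|].
  unfold Rminus. eapply Rle_trans; [apply Rabs_triang|]. rewrite Rabs_Ropp. lra.
Qed.

Lemma square_normle_dP_of_coef (G : series) R y C t : 0 < R -> 0 <= y < 1 ->
  coef_normle G R C t ->
  square_normle (dP G) (y * R) (C / R * (/ (1 - y) * / (1 - y) * / (1 - y))) t.
Proof.
  intros HR Hy HG N. unfold square_psum, dP.
  assert (HC : 0 <= C) by (apply (coef_normle_nonneg G R C t); auto; lra).
  apply Rle_trans with (sum_f_R0 (fun a => sum_f_R0 (fun b =>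
     C / R * (INR (S a) * y ^ a * y ^ b)) N) N).
  - apply sum_Rle; intros a _; apply sum_Rle; intros b _.
    rewrite Rabs_mult, Rabs_right by (apply Rle_ge, pos_INR). rewrite !Rpow_mult_distr.
    specialize (HG (S a) b).
    assert (0 <= INR (S a) * y ^ a * y ^ b)
      by (repeat apply Rmult_le_pos; try apply pos_INR; apply pow_le; lra).
    replace (INR (S a) * Rabs (G (S a) b t) * (y ^ a * R ^ a) * (y ^ b * R ^ b)) with
      ((Rabs (G (S a) b t) * R ^ S a * R ^ b) / R * (INR (S a) * y ^ a * y ^ b))
      by (simpl; field; lra).
    apply Rmult_le_compat_r; auto. unfold Rdiv.
    apply Rmult_le_compat_r; auto. apply Rlt_le, Rinv_0_lt_compat; auto.
  - replace (sum_f_R0 (fun a => sum_f_R0 (fun b => C / R * (INR (S a) * y ^ a * y ^ b)) N) N)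
      with (C / R * (sum_f_R0 (fun a => INR (S a) * y ^ a) N * sum_f_R0 (fun i => y ^ i) N)).
    2: { rewrite sum_f_R0_mult, scal_sum. apply sum_eq; intros.
         rewrite Rmult_comm, scal_sum. apply sum_eq; intros; ring. }
    apply Rmult_le_compat_l; [apply Rmult_le_pos; auto; apply Rlt_le, Rinv_0_lt_compat; auto|].
    apply Rmult_le_compat; try apply cond_pos_sum; intros;
      try apply Rmult_le_pos; try apply pos_INR; try apply pow_le; try lra.
    + apply sum_geom_deriv_le; lra.
    + apply sum_geom_le; lra.
Qed.

Lemma square_normle_dQ_of_coef (G : series) R y C t : 0 < R -> 0 <= y < 1 ->
  coef_normle G R C t ->
  square_normle (dQ G) (y * R) (C / R * (/ (1 - y) * / (1 - y) * / (1 - y))) t.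
Proof.
  intros HR Hy HG. apply (square_normle_transpose (dP (transpose G))).
  apply square_normle_dP_of_coef; auto. intros a b. unfold transpose.
  rewrite Rmult_assoc, (Rmult_comm (R ^ a)), <- Rmult_assoc. apply HG.
Qed.

(** * The Lie series *)

Lemma square_normle_scal (G : series) c rho B t : 0 <= c ->
  square_normle G rho B t -> square_normle (fun a b t => c * G a b t) rho (c * B) t.
Proof.
  intros Hc HG N. unfold square_psum.
  replace (sum_f_R0 (fun a => sum_f_R0 (fun b =>
    Rabs (c * G a b t) * rho ^ a * rho ^ b) N) N) with (c * square_psum G rho t N).
  - apply Rmult_le_compat_l; auto.
  - unfold square_psum. rewrite scal_sum. apply sum_eq; intros.
    rewrite Rmult_comm, scal_sum. apply sum_eq; intros.
    rewrite Rabs_mult, (Rabs_right c) by lra. ring.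
Qed.

Lemma square_normle_Lchi_pow (X F : series) R' K D del t : 0 < del ->
  (forall rho, 0 <= rho <= R' -> square_normle F rho K t) ->
  (forall rho, 0 <= rho <= R' ->
     square_normle (dP X) rho D t /\ square_normle (dQ X) rho D t) ->
  forall i rho, 0 <= rho -> rho + INR i * del <= R' ->
    square_normle (Lchi_pow X i F) rho (K * (2 * D / del) ^ i) t.
Proof.
  intros Hdel HF HX i. induction i as [|i IH]; intros rho Hr Hi.
  - simpl in *. rewrite Rmult_1_r. apply HF. lra.
  - rewrite S_INR in Hi. assert (0 <= INR i) by apply pos_INR.
    assert (HG := IH (rho + del) ltac:(lra) ltac:(lra)).
    destruct (HX rho) as [HXp HXq]; [nra|].
    eapply square_normle_weaken; [|apply (square_normle_Lchi X (Lchi_pow X i F) rho); eauto;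
      [apply (square_normle_dQ _ rho (rho + del))|apply (square_normle_dP _ rho (rho + del))];
      eauto; lra].
    replace (rho + del - rho) with del by ring. simpl. right. field. lra.
Qed.

Lemma pow_div_fact_le_exp n : INR n ^ n / INR (fact n) <= exp 1 ^ n.
Proof.
  rewrite <- (Rpower_pow n (exp 1)) by apply exp_pos. unfold Rpower. rewrite ln_exp, Rmult_1_r.
  eapply Rle_trans; [|apply (exp_ge_taylor (INR n) n (pos_INR n))].
  apply (sum_f_R0_term_le (fun k => INR n ^ k / INR (fact k))); auto.
  intros k. apply Rmult_le_pos; [apply pow_le, pos_INR|].
  apply Rlt_le, Rinv_0_lt_compat, lt_0_INR, lt_O_fact.
Qed.

Lemma lie_coef_pow_le m c : 0 <= c ->
  INR m / INR (fact (S m)) * (INR m * c) ^ m <= (exp 1 * c) ^ m.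
Proof.
  intros Hc. rewrite !Rpow_mult_distr, <- Rmult_assoc.
  apply Rmult_le_compat_r; [apply pow_le; auto|].
  eapply Rle_trans; [|apply pow_div_fact_le_exp].
  assert (Hm : INR m * / INR (S m) <= 1).
  { apply Rmult_le_reg_r with (INR (S m)); [apply lt_0_INR; lia|].
    rewrite Rmult_assoc, Rinv_l by (apply not_0_INR; lia). rewrite S_INR. lra. }
  assert (0 <= / INR (fact m) * INR m ^ m).
  { apply Rmult_le_pos; [apply Rlt_le, Rinv_0_lt_compat, lt_0_INR, lt_O_fact|].
    apply pow_le, pos_INR. }
  change (fact (S m)) with (S m * fact m)%nat.
  unfold Rdiv. rewrite mult_INR, Rinv_mult. nra.
Qed.

Lemma infinite_sum_of_square_normle_geom (Gs : nat -> series) rho K th t p q :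
  0 < rho -> 0 <= th < 1 -> (forall s, square_normle (Gs s) rho (K * th ^ s) t) ->
  infinite_sum (fun s => Gs s p q t) (Series (fun s => Gs s p q t)).
Proof.
  intros Hr Hth HG. apply is_series_Reals, Series_correct.
  assert (Hw : 0 < rho ^ p * rho ^ q) by (apply Rmult_lt_0_compat; apply pow_lt; auto).
  assert (rho ^ p <> 0) by (apply pow_nonzero; lra).
  assert (rho ^ q <> 0) by (apply pow_nonzero; lra).
  apply (@ex_series_le R_AbsRing R_CompleteNormedModule _
           (fun s => K / (rho ^ p * rho ^ q) * th ^ s)).
  - intros s. change (norm (Gs s p q t)) with (Rabs (Gs s p q t)).
    apply Rmult_le_reg_r with (rho ^ p * rho ^ q); auto.
    replace (K / (rho ^ p * rho ^ q) * th ^ s * (rho ^ p * rho ^ q)) with (K * th ^ s)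
      by (field; auto).
    rewrite <- Rmult_assoc. apply coef_normle_of_square_normle; auto; lra.
  - apply (ex_series_scal (K / (rho ^ p * rho ^ q)) (fun s => th ^ s)), ex_series_geom.
    rewrite Rabs_right; lra.
Qed.

Lemma Un_cv_const c : Un_cv (fun _ => c) c.
Proof. intros e He. exists 0%nat. intros. unfold R_dist. rewrite Rminus_diag, Rabs_R0. auto. Qed.

Lemma Un_cv_sum_f_R0 (U : nat -> nat -> R) (l : nat -> R) N :
  (forall i, Un_cv (fun M => U M i) (l i)) ->
  Un_cv (fun M => sum_f_R0 (U M) N) (sum_f_R0 l N).
Proof. intros H. induction N; simpl; [apply H|apply CV_plus; auto]. Qed.

Lemma square_normle_series (Gs : nat -> series) (G : series) rho b B t : 0 <= rho ->
  (forall s, square_normle (Gs s) rho (b s) t) -> (forall M, sum_f_R0 b M <= B) ->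
  (forall p q, infinite_sum (fun s => Gs s p q t) (G p q t)) ->
  square_normle G rho B t.
Proof.
  intros Hr HGs Hb HG N.
  set (W := fun M => sum_f_R0 (fun a => sum_f_R0 (fun c =>
     Rabs (sum_f_R0 (fun s => Gs s a c t) M) * rho ^ a * rho ^ c) N) N).
  assert (HW : forall M, W M <= B).
  { intros M. eapply Rle_trans; [|apply (Hb M)].
    apply Rle_trans with (sum_f_R0 (fun s => square_psum (Gs s) rho t N) M);
      [|apply sum_Rle; intros; apply HGs].
    unfold W, square_psum.
    apply Rle_trans with (sum_f_R0 (fun a => sum_f_R0 (fun c => sum_f_R0 (fun s =>
      Rabs (Gs s a c t) * rho ^ a * rho ^ c) M) N) N).
    - apply sum_Rle; intros a _; apply sum_Rle; intros c _.
      rewrite Rmult_assoc, (Rmult_comm (Rabs _)).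
      eapply Rle_trans.
      { apply Rmult_le_compat_l; [apply Rmult_le_pos; apply pow_le; auto|].
        apply sum_f_R0_triangle. }
      right. rewrite scal_sum. apply sum_eq; intros; ring.
    - right. rewrite (sum_eq _ (fun a => sum_f_R0 (fun s => sum_f_R0 (fun c =>
        Rabs (Gs s a c t) * rho ^ a * rho ^ c) N) M)) by (intros; apply sum_f_R0_swap).
      apply sum_f_R0_swap. }
  apply (Rle_cv_lim HW); [|apply Un_cv_const].
  unfold W, square_psum. apply Un_cv_sum_f_R0; intros a. apply Un_cv_sum_f_R0; intros c.
  apply CV_mult; [apply CV_mult|]; try apply Un_cv_const. apply cv_cvabs, HG.
Qed.

Definition lie_term (X F : series) (s : nat) : series :=
  fun p q t => INR (S s) / INR (fact (S (S s))) * Lchi_pow X (S s) F p q t.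

Definition lie_series (X F : series) : series :=
  fun p q t => Series (fun s => lie_term X F s p q t).

Section LieSeries.

Variables (X F : series) (R' r K D t : R).
Hypothesis (Hr : 0 < r < R') (HK : 0 <= K) (HD : 0 <= D).
Hypothesis HF : forall rho, 0 <= rho <= R' -> square_normle F rho K t.
Hypothesis HX : forall rho, 0 <= rho <= R' ->
  square_normle (dP X) rho D t /\ square_normle (dQ X) rho D t.

Let theta := exp 1 * (2 * D / (R' - r)).

(* The factor [(s + 1)^(s + 1)] produced by [s + 1] Cauchy estimates on radius
   steps [(R' - r) / (s + 1)] is compensated by the factorial. *)
Lemma square_normle_lie_term s :
  square_normle (lie_term X F s) r (K * theta ^ S s) t.
Proof.
  set (m := INR (S s)).
  assert (Hm : 0 < m) by (apply lt_0_INR; lia).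
  assert (Hc : 0 <= m / INR (fact (S (S s)))).
  { apply Rmult_le_pos; [lra|apply Rlt_le, Rinv_0_lt_compat, lt_0_INR, lt_O_fact]. }
  assert (0 <= 2 * D / (R' - r)) by (apply Rmult_le_pos; [lra|apply Rlt_le, Rinv_0_lt_compat; lra]).
  assert (HL := square_normle_Lchi_pow X F R' K D ((R' - r) / m) t
    ltac:(apply Rdiv_lt_0_compat; lra) HF HX (S s) r ltac:(lra)
    ltac:(fold m; replace (r + m * ((R' - r) / m)) with R' by (field; lra); lra)).
  eapply square_normle_weaken; [|exact (square_normle_scal _ _ _ _ _ Hc HL)].
  unfold theta. rewrite <- Rmult_assoc, (Rmult_comm _ K), Rmult_assoc.
  apply Rmult_le_compat_l; auto.
  replace (2 * D / ((R' - r) / m)) with (m * (2 * D / (R' - r))) by (field; lra).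
  apply lie_coef_pow_le; auto.
Qed.

Lemma square_normle_lie_series : theta <= 1 / 2 ->
  (forall p q, infinite_sum (fun s => lie_term X F s p q t) (lie_series X F p q t)) /\
  square_normle (lie_series X F) r (2 * K * theta) t.
Proof.
  intros Htheta.
  assert (Hth0 : 0 <= theta).
  { apply Rmult_le_pos; [apply Rlt_le, exp_pos|].
    apply Rmult_le_pos; [lra|apply Rlt_le, Rinv_0_lt_compat; lra]. }
  assert (Hterm : forall s, square_normle (lie_term X F s) r (K * theta * theta ^ s) t).
  { intros s. rewrite Rmult_assoc. apply square_normle_lie_term. }
  assert (Hsum : forall p q, infinite_sum (fun s => lie_term X F s p q t) (lie_series X F p q t)).
  { intros p q. apply (infinite_sum_of_square_normle_geom (lie_term X F) r (K * theta) theta);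
      auto; lra. }
  split; auto.
  apply (square_normle_series (lie_term X F) _ r (fun s => K * theta * theta ^ s)); auto; [lra|].
  intros M. rewrite (sum_eq _ (fun s => theta ^ s * (K * theta))) by (intros; ring).
  rewrite <- scal_sum. replace (2 * K * theta) with (K * theta * 2) by ring.
  apply Rmult_le_compat_l; [apply Rmult_le_pos; auto|].
  eapply Rle_trans; [apply sum_geom_le; lra|].
  apply Rmult_le_reg_l with (1 - theta); [lra|].
  rewrite Rinv_r by lra. lra.
Qed.

End LieSeries.

(** * Coefficients of the generating function *)

Lemma derivable_pt_lim_exp_scal lam s :
  derivable_pt_lim (fun u => exp (lam * u)) s (lam * exp (lam * s)).
Proof.
  assert (H := derivable_pt_lim_comp (mult_real_fct lam id) exp s (lam * 1) (exp (lam * s))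
    (derivable_pt_lim_scal id lam s 1 (derivable_pt_lim_id s)) (derivable_pt_lim_exp _)).
  replace (lam * exp (lam * s)) with (exp (lam * s) * (lam * 1)) by ring. exact H.
Qed.

Lemma derivable_pt_lim_exp_weighted (x f : R -> R) lam s :
  derivable_pt_lim x s (f s - lam * x s) ->
  derivable_pt_lim (fun u => exp (lam * u) * x u) s (exp (lam * s) * f s).
Proof.
  intros H. replace (exp (lam * s) * f s) with
    (lam * exp (lam * s) * x s + exp (lam * s) * (f s - lam * x s)) by ring.
  exact (derivable_pt_lim_mult _ _ s _ _ (derivable_pt_lim_exp_scal lam s) H).
Qed.

Lemma Rabs_sub_le_of_derive_bound (y y' h h' : R -> R) t0 t1 : t0 < t1 ->
  (forall s, t0 <= s <= t1 -> derivable_pt_lim y s (y' s)) ->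
  (forall s, t0 <= s <= t1 -> derivable_pt_lim h s (h' s)) ->
  (forall s, t0 <= s <= t1 -> Rabs (y' s) <= h' s) ->
  Rabs (y t1 - y t0) <= h t1 - h t0.
Proof.
  intros Ht Hy Hh Hb.
  destruct (MVT_cor2 (h - y)%F (fun s => h' s - y' s) t0 t1 Ht) as [c [E1 Hc]].
  { intros u Hu. apply derivable_pt_lim_minus; auto. }
  destruct (MVT_cor2 (h + y)%F (fun s => h' s + y' s) t0 t1 Ht) as [c' [E2 Hc']].
  { intros u Hu. apply derivable_pt_lim_plus; auto. }
  unfold minus_fct, plus_fct in *.
  assert (B1 := Hb c ltac:(lra)). assert (B2 := Hb c' ltac:(lra)).
  apply Rabs_le_between in B1. apply Rabs_le_between in B2.
  assert (0 <= (h' c - y' c) * (t1 - t0)) by (apply Rmult_le_pos; lra).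
  assert (0 <= (h' c' + y' c') * (t1 - t0)) by (apply Rmult_le_pos; lra).
  apply Rabs_le. lra.
Qed.

Lemma continuity_pt_of_cont_on_Rplus (f : R -> R) s :
  cont_on_Rplus f -> 0 < s -> continuity_pt f s.
Proof.
  intros Hf Hs eps He. destruct (Hf s (Rlt_le _ _ Hs) eps He) as [del [Hdel H]].
  exists (Rmin del s). split; [apply Rmin_pos; auto|].
  intros u [_ Hu]. simpl in *. unfold R_dist in *.
  assert (Rabs (u - s) < del) by (eapply Rlt_le_trans; [apply Hu|apply Rmin_l]).
  assert (Rabs (u - s) < s) by (eapply Rlt_le_trans; [apply Hu|apply Rmin_r]).
  apply H; auto. apply Rabs_def2 in H1. lra.
Qed.

Lemma cont_on_Rplus_near_0 (f : R -> R) eps t : cont_on_Rplus f -> 0 < eps -> 0 < t ->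
  exists t', 0 < t' <= t /\ Rabs (f t' - f 0) < eps.
Proof.
  intros Hf He Ht. destruct (Hf 0 (Rle_refl 0) eps He) as [del [Hdel H]].
  exists (Rmin (del / 2) t). assert (0 < Rmin (del / 2) t) by (apply Rmin_pos; lra).
  split; [split; auto; apply Rmin_r|].
  apply H; [lra|]. rewrite Rminus_0_r, Rabs_right by lra.
  eapply Rle_lt_trans; [apply Rmin_l|lra].
Qed.

Lemma exp_le_mono u v : u <= v -> exp u <= exp v.
Proof. intros [H | ->]; [left; apply exp_increasing; auto|lra]. Qed.

Section LinearODE.

Variables (f x : R -> R) (lam M : R).
Hypothesis HM : 0 <= M.
Hypothesis Hx' : forall s, 0 < s -> derivable_pt_lim x s (f s - lam * x s).
Hypothesis Hx : cont_on_Rplus x.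

Let y u := exp (lam * u) * x u.

Lemma Rabs_weighted_sub_le a t0 t1 : lam - a <> 0 -> 0 < t0 < t1 ->
  (forall s, 0 < s -> Rabs (f s) <= M * exp (- a * s)) ->
  Rabs (y t1 - y t0) <=
  M / (lam - a) * exp ((lam - a) * t1) - M / (lam - a) * exp ((lam - a) * t0).
Proof.
  intros Hb Ht Hf.
  apply (Rabs_sub_le_of_derive_bound y (fun s => exp (lam * s) * f s)
    (fun u => M / (lam - a) * exp ((lam - a) * u))
    (fun s => M / (lam - a) * ((lam - a) * exp ((lam - a) * s)))); [lra| | |].
  - intros s Hs. apply derivable_pt_lim_exp_weighted, Hx'. lra.
  - intros s Hs. apply derivable_pt_lim_scal, derivable_pt_lim_exp_scal.
  - intros s Hs. rewrite Rabs_mult, Rabs_right by (apply Rle_ge, Rlt_le, exp_pos).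
    replace (M / (lam - a) * ((lam - a) * exp ((lam - a) * s))) with
      (exp (lam * s) * (M * exp (- a * s)))
      by (replace ((lam - a) * s) with (lam * s + - a * s) by ring; rewrite exp_plus; field; auto).
    apply Rmult_le_compat_l; [apply Rlt_le, exp_pos|]. apply Hf. lra.
Qed.

Lemma Rabs_solution_le_of_weighted (t B : R) : Rabs (y t) <= B * exp (lam * t) -> Rabs (x t) <= B.
Proof.
  unfold y. rewrite Rabs_mult, Rabs_right by (apply Rle_ge, Rlt_le, exp_pos). intros H.
  apply Rmult_le_reg_l with (exp (lam * t)); [apply exp_pos|]. lra.
Qed.

Lemma Rabs_solution_le_pos : 0 < lam -> x 0 = 0 ->
  (forall s, 0 <= s -> Rabs (f s) <= M) ->
  forall t, 0 <= t -> Rabs (x t) <= M / lam.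
Proof.
  intros Hl Hx0 Hf t Ht.
  assert (HMl : 0 <= M / lam) by (apply Rmult_le_pos; auto; apply Rlt_le, Rinv_0_lt_compat; auto).
  destruct (Req_dec t 0) as [->|Htn]; [rewrite Hx0, Rabs_R0; auto|].
  apply Rabs_solution_le_of_weighted, Rle_plus_epsilon. intros eps Heps.
  assert (He : 0 < exp (lam * t)) by apply exp_pos.
  destruct (cont_on_Rplus_near_0 x (eps / exp (lam * t)) (t / 2) Hx)
    as [t' [Ht' Hxt']]; [apply Rdiv_lt_0_compat; auto|lra|].
  rewrite Hx0, Rminus_0_r in Hxt'.
  assert (Hyy : Rabs (y t - y t') <= M / lam * exp (lam * t) - M / lam * exp (lam * t')).
  { assert (H := Rabs_weighted_sub_le 0 t' t ltac:(lra) ltac:(lra)).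
    rewrite Rminus_0_r in H. apply H. intros s Hs.
    rewrite Ropp_0, Rmult_0_l, exp_0, Rmult_1_r. apply Hf. lra. }
  assert (Hyt' : Rabs (y t') <= eps).
  { unfold y. rewrite Rabs_mult, Rabs_right by (apply Rle_ge, Rlt_le, exp_pos).
    assert (exp (lam * t') <= exp (lam * t)).
    { apply exp_le_mono. apply Rmult_le_compat_l; lra. }
    apply Rle_trans with (exp (lam * t) * (eps / exp (lam * t))); [|right; field; lra].
    apply Rmult_le_compat; try lra; [apply Rlt_le, exp_pos|apply Rabs_pos]. }
  assert (0 <= M / lam * exp (lam * t')) by (apply Rmult_le_pos; auto; apply Rlt_le, exp_pos).
  assert (HT := Rabs_triang (y t - y t') (y t')).
  replace (y t - y t' + y t') with (y t) in HT by ring. lra.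
Qed.

Lemma RInt_weighted (t0 t1 : R) : cont_on_Rplus f -> 0 < t0 < t1 ->
  RInt (fun s => exp (lam * s) * f s) t0 t1 = y t1 - y t0.
Proof.
  intros Hfc Ht. apply (@is_RInt_unique R_CompleteNormedModule).
  apply (@is_RInt_derive R_CompleteNormedModule y).
  - intros u Hu. rewrite Rmin_left, Rmax_right in Hu by lra.
    apply is_derive_Reals, derivable_pt_lim_exp_weighted, Hx'. lra.
  - intros u Hu. rewrite Rmin_left, Rmax_right in Hu by lra.
    apply continuity_pt_filterlim, (continuity_pt_mult (fun s => exp (lam * s)) f).
    + apply derivable_continuous_pt. exists (lam * exp (lam * u)).
      apply derivable_pt_lim_exp_scal.
    + apply continuity_pt_of_cont_on_Rplus; auto; lra.
Qed.

(* Only right-continuity of [x] at [0] is available, so the integral over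
   [[0, T]] is obtained from those over [[t', T]] as [t'] tends to [0]. *)
Lemma RiemannInt_weighted (T : R) : lam <= 0 -> cont_on_Rplus f ->
  (forall s, 0 <= s -> Rabs (f s) <= M) -> 0 < T ->
  forall pr : Riemann_integrable (fun s => exp (lam * s) * f s) 0 T,
  y T - x 0 = RiemannInt pr.
Proof.
  intros Hl Hfc Hf HT pr. set (g := fun s => exp (lam * s) * f s).
  apply cond_eq. intros eta Heta.
  set (K := M - lam * Rabs (x 0) + 1).
  assert (HK : 0 < K) by (unfold K; assert (0 <= Rabs (x 0)) by apply Rabs_pos; nra).
  destruct (cont_on_Rplus_near_0 x (eta / 4) (Rmin (T / 2) (eta / (4 * K))) Hx)
    as [t' [[Ht'0 Ht'] Hxt']]; [lra|apply Rmin_pos; [lra|apply Rdiv_lt_0_compat; lra]|].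
  assert (Ht1 : t' <= T / 2) by (eapply Rle_trans; [apply Ht'|apply Rmin_l]).
  assert (Ht2 : t' * K <= eta / 4).
  { assert (t' <= eta / (4 * K)) by (eapply Rle_trans; [apply Ht'|apply Rmin_r]).
    apply Rmult_le_reg_r with (/ K); [apply Rinv_0_lt_compat; auto|].
    rewrite Rmult_assoc, Rinv_r by lra. replace (eta / 4 * / K) with (eta / (4 * K)) by (field; lra).
    lra. }
  assert (Hex := ex_RInt_Reals_1 _ _ _ pr).
  assert (Hex1 : ex_RInt g 0 t')
    by (apply (@ex_RInt_Chasles_1 R_CompleteNormedModule _ _ _ T); auto; lra).
  assert (Hex2 : ex_RInt g t' T)
    by (apply (@ex_RInt_Chasles_2 R_CompleteNormedModule _ 0); auto; lra).
  assert (HCh := @RInt_Chasles R_CompleteNormedModule g 0 t' T Hex1 Hex2).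
  change (RInt g t' T) with (RInt (fun s => exp (lam * s) * f s) t' T) in HCh.
  rewrite (RInt_Reals g 0 T pr), (RInt_weighted t' T Hfc ltac:(lra)) in HCh.
  change (plus (RInt g 0 t') (y T - y t')) with (RInt g 0 t' + (y T - y t')) in HCh.
  assert (Hexp : exp (lam * t') <= 1) by (rewrite <- exp_0; apply exp_le_mono; nra).
  assert (Hsmall : Rabs (RInt g 0 t') <= (t' - 0) * M).
  { apply abs_RInt_le_const; auto; [lra|]. intros u Hu. unfold g.
    rewrite Rabs_mult, Rabs_right by (apply Rle_ge, Rlt_le, exp_pos).
    assert (exp (lam * u) <= 1) by (rewrite <- exp_0; apply exp_le_mono; nra).
    assert (Rabs (f u) <= M) by (apply Hf; lra).
    assert (0 <= Rabs (f u)) by apply Rabs_pos. nra. }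
  assert (Hy0 : Rabs (y t' - x 0) <= eta / 4 + (- lam * t') * Rabs (x 0)).
  { unfold y. replace (exp (lam * t') * x t' - x 0) with
      (exp (lam * t') * (x t' - x 0) + (exp (lam * t') - 1) * x 0) by ring.
    eapply Rle_trans; [apply Rabs_triang|]. rewrite !Rabs_mult.
    assert (E := exp_ineq1_le (lam * t')). assert (E' := exp_pos (lam * t')).
    rewrite (Rabs_right (exp _)), (Rabs_left1 (exp _ - 1)) by lra.
    assert (0 <= Rabs (x 0)) by apply Rabs_pos.
    assert (0 <= Rabs (x t' - x 0)) by apply Rabs_pos. nra. }
  rewrite <- HCh.
  replace (y T - x 0 - (RInt g 0 t' + (y T - y t'))) with ((y t' - x 0) - RInt g 0 t') by ring.
  eapply Rle_lt_trans; [apply Rabs_triang|]. rewrite Rabs_Ropp.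
  unfold K in Ht2. assert (0 <= Rabs (x 0)) by apply Rabs_pos. nra.
Qed.

Lemma weighted_solution_vanishes : lam <= 0 -> cont_on_Rplus f ->
  (forall s, 0 <= s -> Rabs (f s) <= M) ->
  improper_int0 (fun s => exp (lam * s) * f s) (- x 0) ->
  forall eps, 0 < eps -> exists T0, forall T, T0 <= T -> 0 < T -> Rabs (y T) < eps.
Proof.
  intros Hl Hfc Hf [Hint Hlim] eps Heps. destruct (Hlim eps Heps) as [T0 HT0].
  exists T0. intros T HT HT'. destruct (Hint T ltac:(lra)) as [pr _].
  replace (y T) with (RiemannInt pr - - x 0)
    by (rewrite <- (RiemannInt_weighted T Hl Hfc Hf HT' pr); ring).
  apply HT0; auto; lra.
Qed.

Lemma Rabs_solution_le_nonpos a : lam <= 0 -> 0 < a -> cont_on_Rplus f ->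
  (forall s, 0 <= s -> Rabs (f s) <= M * exp (- a * s)) ->
  improper_int0 (fun s => exp (lam * s) * f s) (- x 0) ->
  forall t, 0 <= t -> Rabs (x t) <= M / (a - lam).
Proof.
  intros Hl Ha Hfc Hf Hint.
  assert (HfM : forall s, 0 <= s -> Rabs (f s) <= M).
  { intros s Hs. eapply Rle_trans; [apply Hf; auto|].
    assert (exp (- a * s) <= 1) by (rewrite <- exp_0; apply exp_le_mono; nra). nra. }
  assert (Hc : 0 <= M / (a - lam)) by (apply Rmult_le_pos; auto; apply Rlt_le, Rinv_0_lt_compat; lra).
  assert (Hpos : forall t, 0 < t -> Rabs (x t) <= M / (a - lam)).
  { intros t Ht. apply Rabs_solution_le_of_weighted.
    apply Rle_trans with (M / (a - lam) * exp ((lam - a) * t)).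
    2: { apply Rmult_le_compat_l; auto. apply exp_le_mono. nra. }
    apply Rle_plus_epsilon. intros eps Heps.
    destruct (weighted_solution_vanishes Hl Hfc HfM Hint eps Heps) as [T0 HT0].
    set (T := Rmax T0 (t + 1)).
    assert (HyT := HT0 T (Rmax_l _ _) ltac:(unfold T; assert (H := Rmax_r T0 (t + 1)); lra)).
    assert (Hyy := Rabs_weighted_sub_le a t T ltac:(lra)
      ltac:(unfold T; assert (H := Rmax_r T0 (t + 1)); lra)
      ltac:(intros; apply Hf; lra)).
    replace (M / (lam - a)) with (- (M / (a - lam))) in Hyy by (field; lra).
    assert (0 < exp ((lam - a) * T)) by apply exp_pos.
    assert (HT := Rabs_triang (y T) (- (y T - y t))). rewrite Rabs_Ropp in HT.
    replace (y T + - (y T - y t)) with (y t) in HT by ring. nra. }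
  intros t Ht. destruct (Req_dec t 0) as [->|Htn]; [|apply Hpos; lra].
  apply Rle_plus_epsilon. intros eps Heps.
  destruct (cont_on_Rplus_near_0 x eps 1 Hx Heps Rlt_0_1) as [t' [Ht' Hxt']].
  assert (H := Hpos t' ltac:(lra)).
  assert (HT := Rabs_triang (x t') (- (x t' - x 0))). rewrite Rabs_Ropp in HT.
  replace (x t' + - (x t' - x 0)) with (x 0) in HT by ring. lra.
Qed.

End LinearODE.

Lemma Rdiv_le_Rdiv_l M u v : 0 <= M -> 0 < v -> v <= u -> M / u <= M / v.
Proof. intros HM Hv Hu. apply Rmult_le_compat_l; auto. apply Rinv_le_contravar; auto. Qed.

(* Both branches of the definition of [chi] are controlled by [1 / (omega a)]:
   a positive rate is at least [omega], and the decay rate [a] helps otherwise. *)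
Lemma gen_fun_coef_bound (omega a eps R : R) (F X : series) :
  0 < omega <= 1 -> 0 < a <= 1 -> 0 <= eps -> 0 < R -> coeffs_continuous F ->
  (forall t, 0 <= t -> coef_normle F R (eps * exp (- a * t)) t) ->
  is_gen_fun omega F X ->
  forall t, 0 <= t -> coef_normle X R (eps / (omega * a)) t.
Proof.
  intros Ho Ha He HR HFc HF HX t Ht p q.
  assert (HRpq : 0 < R ^ p * R ^ q) by (apply Rmult_lt_0_compat; apply pow_lt; auto).
  assert (R ^ p <> 0) by (apply pow_nonzero; lra).
  assert (R ^ q <> 0) by (apply pow_nonzero; lra).
  set (M := eps / (R ^ p * R ^ q)).
  assert (HM : 0 <= M) by (apply Rmult_le_pos; auto; apply Rlt_le, Rinv_0_lt_compat; auto).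
  assert (Hf : forall s, 0 <= s -> Rabs (F p q s) <= M * exp (- a * s)).
  { intros s Hs. apply Rmult_le_reg_r with (R ^ p * R ^ q); auto.
    unfold M. replace (eps / (R ^ p * R ^ q) * exp (- a * s) * (R ^ p * R ^ q))
      with (eps * exp (- a * s)) by (field; auto).
    rewrite <- Rmult_assoc. apply (HF s Hs). }
  assert (Hoa : 0 < omega * a) by (apply Rmult_lt_0_compat; lra).
  apply Rle_trans with (M / (omega * a) * (R ^ p * R ^ q)).
  2: { right. unfold M. field. repeat split; lra. }
  rewrite Rmult_assoc. apply Rmult_le_compat_r; [lra|].
  destruct (HX p q) as [Hd [Hc [Hpos Hnonpos]]].
  set (lam := omega * (INR p - INR q)) in *.
  destruct (Rlt_le_dec 0 lam) as [Hl|Hl].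
  - assert (Hlo : omega <= lam).
    { assert (H1 : INR q < INR p) by (unfold lam in Hl; nra).
      apply INR_lt, le_INR in H1. rewrite S_INR in H1. unfold lam. nra. }
    eapply Rle_trans; [apply (Rabs_solution_le_pos (F p q) (X p q) lam M); auto|].
    + intros s Hs. eapply Rle_trans; [apply Hf; auto|].
      assert (exp (- a * s) <= 1) by (rewrite <- exp_0; apply exp_le_mono; nra). nra.
    + apply Rle_trans with (M / omega); apply Rdiv_le_Rdiv_l; auto; nra.
  - eapply Rle_trans; [apply (Rabs_solution_le_nonpos (F p q) (X p q) lam M HM Hd Hc a);
      auto; lra|].
    apply Rle_trans with (M / a); apply Rdiv_le_Rdiv_l; auto; nra.
Qed.

(** * The iterative step *)

Lemma inv_one_minus_le y d : 0 < d -> 0 <= y <= 1 - d -> 0 <= / (1 - y) <= / d.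
Proof.
  intros Hd Hy. split; [apply Rlt_le, Rinv_0_lt_compat; lra|].
  apply Rinv_le_contravar; lra.
Qed.

Section ShrunkDisc.

Variables (G : series) (R d C t : R).
Hypothesis (HR : 0 < R) (Hd : 0 < d < 1).
Hypothesis HG : coef_normle G R C t.

Lemma shrunk_radius rho : 0 <= rho <= (1 - d) * R ->
  rho = rho / R * R /\ 0 <= / (1 - rho / R) <= / d /\ 0 <= rho / R < 1.
Proof.
  intros Hr. assert (Hy : 0 <= rho / R <= 1 - d).
  { split; [apply Rmult_le_pos; [lra|apply Rlt_le, Rinv_0_lt_compat; lra]|].
    apply Rmult_le_reg_r with R; auto. unfold Rdiv. rewrite Rmult_assoc, Rinv_l; lra. }
  split; [field; lra|]. split; [apply inv_one_minus_le|]; lra.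
Qed.

Lemma square_normle_of_coef_shrunk rho : 0 <= rho <= (1 - d) * R ->
  square_normle G rho (C / d ^ 2) t.
Proof.
  intros Hr. destruct (shrunk_radius rho Hr) as [Hrho [Hi Hy]]. rewrite Hrho.
  assert (HC : 0 <= C) by (apply (coef_normle_nonneg G R C t); auto; lra).
  eapply square_normle_weaken; [|apply (square_normle_of_coef G R _ C); auto].
  replace (C / d ^ 2) with (C * (/ d * / d)) by (field; lra).
  apply Rmult_le_compat_l; auto. apply Rmult_le_compat; lra.
Qed.

Lemma square_normle_dP_dQ_of_coef_shrunk rho : 0 <= rho <= (1 - d) * R ->
  square_normle (dP G) rho (C / (R * d ^ 3)) t /\ square_normle (dQ G) rho (C / (R * d ^ 3)) t.
Proof.
  intros Hr. destruct (shrunk_radius rho Hr) as [Hrho [Hi Hy]]. rewrite Hrho.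
  assert (HC : 0 <= C) by (apply (coef_normle_nonneg G R C t); auto; lra).
  assert (Hle : C / R * (/ (1 - rho / R) * / (1 - rho / R) * / (1 - rho / R)) <= C / (R * d ^ 3)).
  { replace (C / (R * d ^ 3)) with (C / R * (/ d * / d * / d)) by (field; lra).
    apply Rmult_le_compat_l; [apply Rmult_le_pos; auto; apply Rlt_le, Rinv_0_lt_compat; auto|].
    assert (0 <= / (1 - rho / R) * / (1 - rho / R)) by (apply Rmult_le_pos; lra).
    apply Rmult_le_compat; try apply Rmult_le_compat; lra. }
  split; (eapply square_normle_weaken; [apply Hle|]).
  - apply square_normle_dP_of_coef; auto.
  - apply square_normle_dQ_of_coef; auto.
Qed.

End ShrunkDisc.

Lemma lie_step (F X : series) R d K C t : 0 < R -> 0 < d < 1 / 2 ->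
  coef_normle F R K t -> coef_normle X R C t ->
  exp 1 * C / (R ^ 2 * d ^ 4) <= 1 / 4 ->
  (forall p q, infinite_sum (fun s => lie_term X F s p q t) (lie_series X F p q t)) /\
  square_normle (lie_series X F) ((1 - 2 * d) * R) (4 * K * (exp 1 * C / (R ^ 2 * d ^ 6))) t.
Proof.
  intros HR Hd HF HX Hsmall.
  assert (HK : 0 <= K) by (apply (coef_normle_nonneg F R K t); auto; lra).
  assert (HC : 0 <= C) by (apply (coef_normle_nonneg X R C t); auto; lra).
  assert (Hd0 : d <> 0) by lra. assert (HR0 : R <> 0) by lra.
  assert (Htheta : exp 1 * (2 * (C / (R * d ^ 3)) / ((1 - d) * R - (1 - 2 * d) * R))
                   = 2 * (exp 1 * C / (R ^ 2 * d ^ 4))).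
  { replace ((1 - d) * R - (1 - 2 * d) * R) with (d * R) by ring. field; auto. }
  destruct (square_normle_lie_series X F ((1 - d) * R) ((1 - 2 * d) * R) (K / d ^ 2)
    (C / (R * d ^ 3)) t) as [Hsum HG]; try nra.
  - apply Rmult_le_pos; auto. apply Rlt_le, Rinv_0_lt_compat, pow_lt; lra.
  - apply Rmult_le_pos; auto. apply Rlt_le, Rinv_0_lt_compat, Rmult_lt_0_compat, pow_lt; lra.
  - intros rho Hrho. apply (square_normle_of_coef_shrunk F R d); auto; lra.
  - intros rho Hrho. apply (square_normle_dP_dQ_of_coef_shrunk X R d); auto; lra.
  - split; auto. rewrite Htheta in HG. eapply square_normle_weaken; [|apply HG].
    right. field; auto.
Qed.

Lemma quotient_scale_le E C R Rs d k i : 1 <= E -> 0 <= C -> 0 < Rs <= R -> 0 < d <= 1 ->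
  E * C / (R ^ 2 * d ^ k) <= E ^ 2 * C / (Rs ^ 2 * d ^ (k + i)).
Proof.
  intros HE HC HR Hd.
  assert (Hdi : d ^ i <= 1) by (rewrite <- (pow1 i); apply pow_incr; lra).
  assert (0 < d ^ k) by (apply pow_lt; lra). assert (0 < d ^ i) by (apply pow_lt; lra).
  assert (Rs ^ 2 <= R ^ 2) by (apply pow_incr; lra). assert (0 < Rs ^ 2) by (apply pow_lt; lra).
  unfold Rdiv. apply Rmult_le_compat.
  - apply Rmult_le_pos; lra.
  - apply Rlt_le, Rinv_0_lt_compat, Rmult_lt_0_compat; lra.
  - apply Rmult_le_compat_r; auto. simpl. nra.
  - apply Rinv_le_contravar; [apply Rmult_lt_0_compat, pow_lt; lra|].
    rewrite pow_add. apply Rmult_le_compat; nra.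
Qed.

Theorem lemma3 (omega a Rs eps_j d_j R_j : R) (F X : series) :
  0 < omega <= 1 -> 0 < a <= 1 -> 0 < Rs ->
  0 < eps_j -> 0 < d_j <= 1/4 -> Rs < R_j <= 1 ->
  coeffs_continuous F ->
  (forall t, 0 <= t -> normle F R_j (eps_j * exp (- a * t)) t) ->
  4 * exp 2 * eps_j / (omega * a * Rs ^ 2 * d_j ^ 6) <= 1/2 ->
  is_gen_fun omega F X ->
  exists G : series,
    (forall p q t, 0 <= t ->
       infinite_sum
         (fun s => INR (S s) / INR (fact (S (S s))) * Lchi_pow X (S s) F p q t)
         (G p q t)) /\
    (forall t, 0 <= t ->
       normle G ((1 - 2 * d_j) * R_j)
         (8 * exp 2 * eps_j ^ 2 / (omega * a * Rs ^ 2 * d_j ^ 6) * exp (- a * t)) t).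
Proof.
  intros Ho Ha HRs He Hd HR HFc HF Hsmall HX.
  set (C := eps_j / (omega * a)).
  assert (HC : 0 <= C) by (apply Rlt_le, Rdiv_lt_0_compat; nra).
  assert (HFcoef : forall t, 0 <= t -> coef_normle F R_j (eps_j * exp (- a * t)) t)
    by (intros; apply coef_normle_of_normle; auto; lra).
  assert (HXcoef := gen_fun_coef_bound omega a eps_j R_j F X Ho Ha
    ltac:(lra) ltac:(lra) HFc HFcoef HX).
  assert (HE : 1 <= exp 1) by (assert (H := exp_ineq1_le 1); lra).
  assert (HQ : exp 1 ^ 2 * C / (Rs ^ 2 * d_j ^ 6) =
    4 * exp 2 * eps_j / (omega * a * Rs ^ 2 * d_j ^ 6) / 4).
  { replace (exp 1 ^ 2) with (exp 2) by (simpl; rewrite Rmult_1_r, <- exp_plus; f_equal; ring).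
    unfold C. field. repeat split; intro; lra. }
  assert (H4 := quotient_scale_le (exp 1) C R_j Rs d_j 4 2 HE HC ltac:(lra) ltac:(lra)).
  assert (H6 := quotient_scale_le (exp 1) C R_j Rs d_j 6 0 HE HC ltac:(lra) ltac:(lra)).
  change (4 + 2)%nat with 6%nat in H4. change (6 + 0)%nat with 6%nat in H6.
  rewrite HQ in H4, H6.
  assert (Hstep := fun t Ht => lie_step F X R_j d_j _ C t ltac:(lra) ltac:(lra)
    (HFcoef t Ht) (HXcoef t Ht) ltac:(lra)).
  exists (lie_series X F). split; [intros p q t Ht; apply Hstep, Ht|].
  intros t Ht. apply normle_of_square_normle; [nra|].
  eapply square_normle_weaken; [|apply Hstep, Ht].
  assert (0 <= eps_j * exp (- a * t)) by (apply Rmult_le_pos; [lra|apply Rlt_le, exp_pos]).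
  assert (0 <= exp 1 * C / (R_j ^ 2 * d_j ^ 6)).
  { apply Rmult_le_pos; [nra|].
    apply Rlt_le, Rinv_0_lt_compat, Rmult_lt_0_compat; apply pow_lt; lra. }
  replace (8 * exp 2 * eps_j ^ 2 / (omega * a * Rs ^ 2 * d_j ^ 6) * exp (- a * t)) with
    (8 * (eps_j * exp (- a * t)) * (4 * exp 2 * eps_j / (omega * a * Rs ^ 2 * d_j ^ 6) / 4))
    by (field; repeat split; intro; lra).
  nra.
Qed.
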